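(* Let $\mathbb{F}$ be a field, $n\ge4$, and let $g_1,g_2\in\mathrm{GL}_n(\mathbb{F})$ both have minimal polynomials of degree $2$. Then $\langle g_1,g_2\rangle$ does not act absolutely irreducibly on $\mathbb{F}^n$. *)

From HB Require Import structures.
From mathcomp Require Import all_boot all_order all_algebra.
Set Implicit Arguments. Unset Strict Implicit. Unset Printing Implicit Defensive.
Import GRing.Theory.
Local Open Scope ring_scope.

(* Matrices act on row vectors from the right (MathComp convention): v |-> v *m g. *)

Inductive in_gen_group (K : fieldType) (n : nat) (S : seq 'M[K]_n) : 'M[K]_n -> Prop :=
  | gen_one : in_gen_group S 1%:M
  | gen_mul g h : g \in S -> in_gen_group S h -> in_gen_group S (g *m h)
  | gen_mulV g h : g \in S -> in_gen_group S h -> in_gen_group S (invmx g *m h).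

Definition gen_invariant (K : fieldType) (n : nat) (S : seq 'M[K]_n) (W : 'M[K]_n) : Prop :=
  forall h, in_gen_group S h -> (W *m h <= W)%MS.

Definition gen_irreducible (K : fieldType) (n : nat) (S : seq 'M[K]_n) : Prop :=
  (0 < n)%N /\
  forall W : 'M[K]_n, gen_invariant S W -> W = 0 \/ row_full W.

Definition gen_abs_irreducible (F : fieldType) (n : nat) (S : seq 'M[F]_n) : Prop :=
  forall (K : fieldType) (f : {rmorphism F -> K}),
    gen_irreducible [seq map_mx f g | g <- S].

From HB Require Import structures.
From mathcomp Require Import all_boot all_order all_algebra all_field qfpoly.
From Stdlib Require Import Classical.
Set Implicit Arguments. Unset Strict Implicit. Unset Printing Implicit Defensive.
Import GRing.Theory.
Local Open Scope ring_scope.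

(* If x^2 = a x + b and y^2 = c y + d, then z = x y + y x - c x - a y commutes
   with both x and y.  Pass to an extension field in which x has an eigenvector v
   and z an eigenvalue l.  If z <> l, the l-eigenspace of z is a proper nonzero
   invariant subspace of <x, y>.  If z = l, then y x lies in the span of 1, x, y
   and x y, so the span of v and v y is invariant, of dimension at most 2 < n. *)

Lemma monic_irreducible_normalize (F : fieldType) (p : {poly F}) :
  irreducible_poly p -> monic_irreducible_poly ((lead_coef p)^-1 *: p).
Proof.
move=> irr_p; have lp_neq0 : (lead_coef p)^-1 != 0.
  by rewrite invr_eq0 lead_coef_eq0 irredp_neq0.
split; last by apply/monicP; rewrite lead_coefZ mulVf // -invr_eq0.
split=> [|q q_neq1]; first by rewrite size_scale // irr_p.1.
rewrite dvdpZr // => /(irr_p q q_neq1) q_eqp.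
by rewrite (eqp_trans q_eqp) // eqp_sym eqp_scale.
Qed.

Lemma exists_monic_irreducible_dvdp (F : fieldType) (p : {poly F}) :
  (1 < size p)%N -> exists2 q : {poly F}, monic_irreducible_poly q & q %| p.
Proof.
have [k] := ubnP (size p); elim: k p => // k IH p /ltnSE le_p_k p_gt1.
have p_neq0 : p != 0 by rewrite -size_poly_gt0 ltnW.
have [irr_p | red_p] := classic (irreducible_poly p).
  exists ((lead_coef p)^-1 *: p); first exact: monic_irreducible_normalize.
  by rewrite dvdpZl // invr_eq0 lead_coef_eq0.
have [q [q_neq1 q_dvd_p q_neqp]] :
    exists q : {poly F}, [/\ size q != 1%N, q %| p & ~~ (q %= p)].
  apply: NNPP => no_q; apply: red_p; split=> // q q_neq1 q_dvd_p.
  by apply/negPn/negP => q_neqp; apply: no_q; exists q.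
have q_neq0 : q != 0 by apply: contraNneq p_neq0 => q0; rewrite -dvd0p -q0.
have q_gt1 : (1 < size q)%N by rewrite ltn_neqAle eq_sym q_neq1 size_poly_gt0.
have lt_q_p : (size q < size p)%N.
  by rewrite ltn_neqAle dvdp_leq // andbT; apply: contra q_neqp; rewrite dvdp_size_eqp.
have [r irr_r r_dvd_q] := IH q (leq_trans lt_q_p le_p_k) q_gt1.
by exists r => //; apply: dvdp_trans q_dvd_p.
Qed.

Lemma exists_root_extension (F : fieldType) (p : {poly F}) : (1 < size p)%N ->
  exists (K : fieldType) (f : {rmorphism F -> K}) (x : K), root (map_poly f p) x.
Proof.
move=> p_gt1; have [q irr_q /dvdpP[r ->]] := exists_monic_irreducible_dvdp p_gt1.
exists {poly %/ q with irr_q}, (qpolyC q), (in_qpoly q 'X).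
have q_root : in_qpoly q q = 0.
  by apply: val_inj; rewrite /= (mk_monicE irr_q) Pdiv.RingMonic.rmodpp ?irr_q.2.
rewrite rmorphM /= /root hornerM -(in_qpoly_comp_horner q q) comp_polyXr q_root.
by rewrite mulr0.
Qed.

Lemma exists_eigenvalue_extension (F : fieldType) n (M : 'M[F]_n.+1) :
  exists (K : fieldType) (f : {rmorphism F -> K}) (x : K), eigenvalue (map_mx f M) x.
Proof.
have [|K [f [x x_root]]] := @exists_root_extension _ (char_poly M).
  by rewrite size_char_poly.
by exists K, f, x; rewrite eigenvalue_root_char -map_char_poly.
Qed.

Lemma mxminpoly_quadratic (F : fieldType) n (g : 'M[F]_n.+1) :
  size (mxminpoly g) = 3%N -> exists a b : F, g * g = a *: g + b%:A.
Proof.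
move=> size_p; set p := mxminpoly g.
have p2 : p`_2 = 1 by move/monicP: (mxminpoly_monic g); rewrite /lead_coef size_p.
have := mx_root_minpoly g; rewrite -/p -(coefK p) poly_def size_p.
rewrite !big_ord_recr big_ord0 /= add0r p2 scale1r !rmorphD /= !linearZ /=.
rewrite !rmorphXn /= horner_mx_X expr0 expr1 expr2 => root_p.
exists (- p`_1), (- p`_0); apply/eqP; rewrite -subr_eq0 -{}root_p.
by rewrite !scaleNr opprD !opprK addrC (addrC (p`_1 *: g)).
Qed.

Lemma comm_quadratic_anticomm (R : comNzRingType) (A : algType R) (x y : A) (a b : R) :
  x * x = a *: x + b%:A -> GRing.comm x (x * y + y * x - a *: y).
Proof.
move=> xx.
have xxy : x * (x * y) = a *: (x * y) + b *: y.
  by rewrite mulrA xx mulrDl -!scalerAl mul1r.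
have yxx : y * x * x = a *: (y * x) + b *: y.
  by rewrite -mulrA xx mulrDr -!scalerAr mulr1.
rewrite /GRing.comm mulrBr mulrBl mulrDr mulrDl xxy yxx -scalerAr -scalerAl !mulrA.
by rewrite [LHS]addrC -addrA addKr (addrC (a *: _)) addrA addrK addrC.
Qed.

Lemma stablemx_invmx (K : fieldType) r n (W : 'M[K]_(r, n)) g :
  g \in unitmx -> stablemx W g -> stablemx W (invmx g).
Proof.
move=> g_unit Wg; have : (W <= W *m g)%MS.
  have [_ <-] := mxrank_leqif_sup Wg.
  by rewrite mxrankMfree ?row_free_unit.
by move/(submxMr (invmx g)); rewrite -mulmxA mulmxV // mulmx1.
Qed.

Section GeneratedGroup.

Variables (K : fieldType) (n : nat) (S : seq 'M[K]_n).
Hypothesis S_unit : {in S, forall g, g \in unitmx}.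

Lemma gen_invariant_stable (W : 'M[K]_n) :
  {in S, forall g, stablemx W g} -> gen_invariant S W.
Proof.
move=> S_W h; elim=> [|g {}h Sg _ Wh|g {}h Sg _ Wh]; first by rewrite mulmx1.
  by rewrite mulmxA (submx_trans _ Wh) // submxMr // S_W.
by rewrite mulmxA (submx_trans _ Wh) // submxMr // stablemx_invmx ?S_unit ?S_W.
Qed.

Lemma stable_not_irreducible (W : 'M[K]_n) :
  {in S, forall g, stablemx W g} -> W != 0 -> ~~ row_full W -> ~ gen_irreducible S.
Proof.
move=> S_W W_neq0 W_nfull [_ /(_ W (gen_invariant_stable S_W))].
by case=> [/eqP | W_full]; [apply/negP | move/negP: W_nfull].
Qed.

End GeneratedGroup.

Definition central_anticomm (R : comNzRingType) (A : algType R) (x y : A) (a c : R) :=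
  x * y + y * x - c *: x - a *: y.

Section CentralAnticomm.

Variables (R : comNzRingType) (A : algType R) (x y : A) (a b c d : R).

Lemma comm_central_anticomml :
  x * x = a *: x + b%:A -> GRing.comm x (central_anticomm x y a c).
Proof.
move=> xx; rewrite /central_anticomm addrAC.
apply: commrB (comm_quadratic_anticomm y xx) _.
by rewrite /GRing.comm -scalerAr -scalerAl.
Qed.

Lemma comm_central_anticommr :
  y * y = c *: y + d%:A -> GRing.comm y (central_anticomm x y a c).
Proof.
move=> yy; rewrite /central_anticomm (addrC (x * y)).
apply: commrB (comm_quadratic_anticomm x yy) _.
by rewrite /GRing.comm -scalerAr -scalerAl.
Qed.

End CentralAnticomm.

Lemma map_central_anticomm (F K : fieldType) (f : {rmorphism F -> K}) n
    (x y : 'M[F]_n.+1) (a c : F) :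
  map_mx f (central_anticomm x y a c) = central_anticomm (map_mx f x) (map_mx f y) (f a) (f c).
Proof. by rewrite /central_anticomm !map_mxB map_mxD !map_mxZ !map_mxM. Qed.

Lemma map_mx_quadratic (F K : fieldType) (f : {rmorphism F -> K}) n
    (g : 'M[F]_n.+1) (a b : F) :
  g * g = a *: g + b%:A -> map_mx f g * map_mx f g = f a *: map_mx f g + (f b)%:A.
Proof.
move=> gg; rewrite -[_ * _]/(map_mx f g *m map_mx f g) -map_mxM.
by rewrite -[g *m g]/(g * g) gg map_mxD !map_mxZ map_mx1.
Qed.

Section QuadraticPair.

Variables (K : fieldType) (m : nat) (A B : 'M[K]_m.+1) (a b c d : K).
Hypotheses (A_quad : A * A = a *: A + b%:A) (B_quad : B * B = c *: B + d%:A).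

Lemma stablemx_eigenspace_central_anticomm l :
  {in [:: A; B], forall g, stablemx (eigenspace (central_anticomm A B a c) l) g}.
Proof.
move=> g; rewrite !inE => /orP[]/eqP->; apply/comm_mx_stable_eigenspace/comm_mx_sym.
  exact: comm_central_anticomml A_quad.
exact: comm_central_anticommr B_quad.
Qed.

Lemma stablemx_eigenvector_span u l (v : 'rV[K]_m.+1) :
  v *m A = u *: v -> central_anticomm A B a c = l%:M ->
  {in [:: A; B], forall g, stablemx (v + v *m B)%MS g}.
Proof.
move=> vA Z_scalar; have vW := addsmxSl v (v *m B); have vBW := addsmxSr v (v *m B).
have BA : B * A = l%:M + a *: B + c *: A - A * B.
  apply: (canRL (addrK (A * B))); rewrite addrC.
  by apply/eqP; rewrite -!subr_eq -Z_scalar.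
move=> g; rewrite !inE addsmxMr addsmx_sub -mulmxA => /orP[]/eqP->.
  rewrite -[B *m A]/(B * A) BA -mulmxE vA scalemx_sub //= !mulmxDr mulmxN.
  rewrite mul_mx_scalar -!scalemxAr mulmxA vA -scalemxAl.
  by rewrite !addmx_sub ?eqmx_opp ?scalemx_sub.
rewrite -[B *m B]/(B * B) B_quad vBW mulmxDr -!scalemxAr mulmx1.
by rewrite addmx_sub ?scalemx_sub.
Qed.

Lemma quadratic_pair_not_irreducible u l :
  (2 < m.+1)%N -> A \in unitmx -> B \in unitmx ->
  eigenvalue A u -> eigenvalue (central_anticomm A B a c) l ->
  ~ gen_irreducible [:: A; B].
Proof.
move=> m_gt2 A_unit B_unit /eigenvalueP[v vA v_neq0] Zl.
have AB_unit : {in [:: A; B], forall g, g \in unitmx}.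
  by move=> g; rewrite !inE => /orP[]/eqP->.
have [Z_scalar | Z_nscalar] := eqVneq (central_anticomm A B a c) l%:M.
  apply: (stable_not_irreducible AB_unit (stablemx_eigenvector_span vA Z_scalar)).
    by apply: contraNneq v_neq0 => W0; rewrite -submx0 -W0 addsmxSl.
  by rewrite /row_full addsmxE neq_ltn (leq_ltn_trans (rank_leq_row _) m_gt2).
apply: (stable_not_irreducible AB_unit (stablemx_eigenspace_central_anticomm l) Zl).
rewrite -sub1mx; apply: contra_neqN Z_nscalar => /eigenspaceP.
by rewrite mul1mx scalemx1.
Qed.

End QuadraticPair.

Theorem mainTheorem11 (F : fieldType) (n : nat) (hn : (4 <= n.+1)%N)
    (g1 g2 : 'M[F]_n.+1)
    (hg1 : g1 \in unitmx) (hg2 : g2 \in unitmx)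
    (hm1 : size (mxminpoly g1) = 3%N) (hm2 : size (mxminpoly g2) = 3%N) :
  ~ gen_abs_irreducible [:: g1; g2].
Proof.
move=> abs_irr.
have [a1 [b1 g1_quad]] := mxminpoly_quadratic hm1.
have [a2 [b2 g2_quad]] := mxminpoly_quadratic hm2.
have [K1 [f1 [u g1_u]]] := exists_eigenvalue_extension g1.
have [K [f2 [l Z_l]]] :=
  exists_eigenvalue_extension (map_mx f1 (central_anticomm g1 g2 a1 a2)).
pose f : {rmorphism F -> K} := f2 \o f1.
have map_f (M : 'M[F]_n.+1) : map_mx f M = map_mx f2 (map_mx f1 M).
  by rewrite map_mx_comp.
apply: (quadratic_pair_not_irreducible (map_mx_quadratic f g1_quad)
  (map_mx_quadratic f g2_quad) (u := f2 u) (l := l) _ _ _ _ _ (abs_irr K f)).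
- exact: ltnW.
- by rewrite map_unitmx.
- by rewrite map_unitmx.
- by rewrite map_f eigenvalue_map.
- by rewrite -map_central_anticomm map_f.
Qed.
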